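(* Let $m$ be a bounded generating sequence. There is a constant $c$ depending only on $m$ such that the following holds. Let $N\ge1$, $0\le k\le N-1$, $k+1\le l\le N$, and $x\in I_N^{k,l}$. Then for every integer $n\ge M_N$, $$\int_{I_N}|K_n(x-t)|\,d\mu(t)\le \frac{c\,M_lM_k}{M_N^2}.$$
   Context: Let $m=(m_0,m_1,\dots)$ be a sequence of integers $m_k\ge 2$ with $\sup_k m_k<\infty$. $G_m=\prod_k Z_{m_k}$ (where $Z_{m_k}=\{0,\dots,m_k-1\}$ is the group of integers mod $m_k$) with coordinatewise addition mod $m_k$, elements $x=(x_0,x_1,\dots)$, and normalized Haar measure $\mu$ (product of uniform measures). $M_0=1$, $M_{k+1}=m_kM_k$; every $n\in\mathbb{N}$ is uniquely $n=\sum_jn_jM_j$, $n_j\in Z_{m_j}$. $I_N=\{y\in G_m: y_0=\dots=y_{N-1}=0\}$. $r_k(x)=\exp(2\pi ix_k/m_k)$, $\psi_n=\prod_kr_k^{n_k}$, $D_n=\sum_{k=0}^{n-1}\psi_k$, and the Fejér kernel is $K_n=\frac1n\sum_{k=0}^{n-1}D_k$ ($n\ge1$). For $0\le k<l<N$, $I_N^{k,l}$ denotes the set of $x\in G_m$ with $x_0=\dots=x_{k-1}=0$, $x_k\ne0$, $x_{k+1}=\dots=x_{l-1}=0$, $x_l\ne0$, and $x_j$ arbitrary for $j>l$. For $0\le k<N$, $I_N^{k,N}$ denotes the set of $x\in G_m$ with $x_0=\dots=x_{k-1}=0$, $x_k\ne0$, $x_{k+1}=\dots=x_{N-1}=0$,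 and $x_j$ arbitrary for $j\ge N$. *)

From Stdlib Require Import Reals Arith Lia.
Open Scope R_scope.

Fixpoint rsum (f : nat -> R) (n : nat) : R :=
  match n with
  | O => 0
  | S n' => rsum f n' + f n'
  end.

Fixpoint M (m : nat -> nat) (k : nat) : nat :=
  match k with
  | O => 1%nat
  | S k' => (m k' * M m k')%nat
  end.

(* j-th digit n_j of n in the mixed radix system: n = sum_j n_j M_j *)
Definition digit (m : nat -> nat) (n j : nat) : nat :=
  ((n / M m j) mod m j)%nat.

(* Elements of G_m = prod_k Z_{m_k}: sequences x with 0 <= x_k < m_k *)
Definition inG (m : nat -> nat) (x : nat -> nat) : Prop :=
  forall j, (x j < m j)%nat.

Definition gsub (m : nat -> nat) (x t : nat -> nat) : nat -> nat :=
  fun j => ((x j + (m j - t j)) mod m j)%nat.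

(* psi_n(x) = prod_k r_k(x)^{n_k} = exp(i * theta m n x).  Since M_j >= 2^j > n
   for j >= n, all digits n_j with j >= n vanish, so the product is exactly
   the product over j < n. *)
Definition theta (m : nat -> nat) (n : nat) (x : nat -> nat) : R :=
  2 * PI * rsum (fun j => INR (digit m n j * x j) / INR (m j)) n.

Definition psi_re m n x := cos (theta m n x).
Definition psi_im m n x := sin (theta m n x).

Definition D_re m n x := rsum (fun k => psi_re m k x) n.
Definition D_im m n x := rsum (fun k => psi_im m k x) n.

Definition K_re m n x := / INR n * rsum (fun k => D_re m k x) n.
Definition K_im m n x := / INR n * rsum (fun k => D_im m k x) n.

Definition K_abs m n x := sqrt (K_re m n x ^ 2 + K_im m n x ^ 2).

Definition depends_on (m : nat -> nat) (J : nat) (f : (nat -> nat) -> R) : Prop :=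
  forall y z, inG m y -> inG m z -> (forall j, (j < J)%nat -> y j = z j) -> f y = f z.

(* v = int_{I_N} f dmu, for f depending on finitely many coordinates.
   For such f (depending on coordinates < J, J >= N), with respect to the
   normalized Haar (product) measure,
     int_{I_N} f dmu = (1/M_J) * sum_{t in prod_{j<J} Z_{m_j}, t_0=..=t_{N-1}=0} f(t).
   Elements t of prod_{j<J} Z_{m_j} are encoded by a < M_J through their digits;
   t in I_N  iff  M_N divides a. *)
Definition haar_int_IN (m : nat -> nat) (N : nat) (f : (nat -> nat) -> R) (v : R) : Prop :=
  exists J, (N <= J)%nat /\ depends_on m J f /\
    v = rsum (fun a => if Nat.eqb (a mod M m N) 0 then f (fun j => digit m a j) else 0)
             (M m J) / INR (M m J).

Definition in_INkl (m : nat -> nat) (N k l : nat) (x : nat -> nat) : Prop :=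
  inG m x /\
  (forall j, (j < k)%nat -> x j = 0%nat) /\
  x k <> 0%nat /\
  (forall j, (k < j)%nat -> (j < l)%nat -> x j = 0%nat) /\
  ((l < N)%nat -> x l <> 0%nat).

(* In mixed radix the characters factor through the digits: for [b < M_s],
   [psi_(a M_s + b)(y) = psi_b(y) * psi_a(y_s, y_(s+1), ...)] with respect to the shifted radix
   sequence.  If [y_0 = ... = y_(k-1) = 0 <> y_k], a full block [j < M_(k+1)] of characters is a
   sum of nontrivial [m_k]-th roots of unity, so [D_j(y)] vanishes at multiples of [M_(k+1)] and
   [|D_j(y)| <= M_(k+1)].  Splitting [n = a M_N + b], and again [b = a' M_(k+1) + b'], in
   [n K_n = sum_(j<n) D_j], with the shifted kernel controlled by the digit [y_l <> 0], gives
   [|n K_n(y)| <= (a + 1) C M_k M_l <= 2 n C M_k M_l / M_N] for every [y] in [x + I_N].  Integrating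
   this pointwise bound over [I_N], of measure [1 / M_N], gives the claim. *)

From Stdlib Require Import Reals Arith Lia Lra.
From Coquelicot Require Import Complex.
Open Scope R_scope.

Definition shift (s : nat) (f : nat -> nat) : nat -> nat := fun j => f (s + j)%nat.

Lemma M_add m s q : M m (s + q) = (M m s * M (shift s m) q)%nat.
Proof.
  induction q as [|q IHq]; cbn [M].
  - rewrite Nat.add_0_r; lia.
  - rewrite Nat.add_succ_r; cbn [M]; rewrite IHq; unfold shift; lia.
Qed.

Section MixedRadix.

Variable m : nat -> nat.
Hypothesis hm : forall j, (2 <= m j)%nat.

Lemma M_pos j : (0 < M m j)%nat.
Proof. induction j; cbn [M]; [lia|]. specialize (hm j). nia. Qed.

Lemma M_gt_index j : (j < M m j)%nat.
Proof. induction j; cbn [M]; [lia|]. specialize (hm j). nia. Qed.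

Lemma M_le_mono i j : (i <= j)%nat -> (M m i <= M m j)%nat.
Proof.
  induction 1 as [|j _ IH]; [lia|]. cbn [M]. specialize (hm j). nia.
Qed.

Lemma digit_small n j : (n < M m j)%nat -> digit m n j = 0%nat.
Proof. intros H. unfold digit. rewrite Nat.div_small by lia. apply Nat.Div0.mod_0_l. Qed.

Lemma digit_mixed_low s a b p :
  (b < M m s)%nat -> (p < s)%nat -> digit m (a * M m s + b) p = digit m b p.
Proof.
  intros Hb Hp. unfold digit.
  assert (E : M m s = (m p * M m p * M (shift (S p) m) (s - S p))%nat).
  { replace s with (S p + (s - S p))%nat at 1 by lia. now rewrite M_add. }
  rewrite E, Nat.add_comm.
  replace (a * (m p * M m p * M (shift (S p) m) (s - S p)))%nat
    with ((a * M (shift (S p) m) (s - S p) * m p) * M m p)%nat by ring.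
  rewrite Nat.div_add by (pose proof (M_pos p); lia).
  apply Nat.Div0.mod_add.
Qed.

Lemma digit_mixed_high s a b q :
  (b < M m s)%nat -> digit m (a * M m s + b) (s + q) = digit (shift s m) a q.
Proof.
  intros Hb. unfold digit. rewrite M_add, <- Nat.Div0.div_div.
  rewrite Nat.add_comm, Nat.div_add by (pose proof (M_pos s); lia).
  now rewrite (Nat.div_small b).
Qed.

Lemma digit_multiple_low s q p : (p < s)%nat -> digit m (q * M m s) p = 0%nat.
Proof.
  intros Hp. rewrite <- (Nat.add_0_r (q * M m s)), digit_mixed_low by (auto using M_pos).
  apply digit_small, M_pos.
Qed.

End MixedRadix.

Lemma rsum_ext f g n : (forall j, (j < n)%nat -> f j = g j) -> rsum f n = rsum g n.
Proof. induction n; intros H; cbn [rsum]; auto. rewrite IHn, H; auto. Qed.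

Lemma rsum_add f p q : rsum f (p + q) = rsum f p + rsum (fun i => f (p + i)%nat) q.
Proof.
  induction q as [|q IHq]; cbn [rsum].
  - rewrite Nat.add_0_r; ring.
  - rewrite Nat.add_succ_r; cbn [rsum]; rewrite IHq; ring.
Qed.

Lemma rsum_block f a b : rsum f (a * b) = rsum (fun i => rsum (fun j => f (i * b + j)%nat) b) a.
Proof. induction a; simpl; auto. now rewrite <- IHa, Nat.add_comm, rsum_add. Qed.

Lemma rsum_eq0 f n : (forall j, (j < n)%nat -> f j = 0) -> rsum f n = 0.
Proof. induction n; intros H; cbn [rsum]; auto. rewrite IHn, H; auto; ring. Qed.

Lemma rsum_le_const f n c : (forall j, (j < n)%nat -> f j <= c) -> rsum f n <= INR n * c.
Proof.
  induction n; intros H; cbn [rsum]; [simpl; lra|]. rewrite S_INR.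
  pose proof (IHn (fun j Hj => H j ltac:(lia))). pose proof (H n ltac:(lia)). lra.
Qed.

Lemma rsum_vanishing_tail f n p :
  (forall j, (n <= j)%nat -> f j = 0) -> (forall j, (p <= j)%nat -> f j = 0) -> rsum f n = rsum f p.
Proof.
  intros Hn Hp.
  assert (Htail : forall q r, (forall j, (q <= j)%nat -> f j = 0) -> (q <= r)%nat -> rsum f r = rsum f q).
  { intros q r Hq Hr. replace r with (q + (r - q))%nat by lia.
    rewrite rsum_add, (rsum_eq0 (fun i => f (q + i)%nat)) by (intros; apply Hq; lia). ring. }
  rewrite <- (Htail n (n + p)%nat), <- (Htail p (n + p)%nat) by (auto; lia). reflexivity.
Qed.

Definition theta_term m n (y : nat -> nat) j := INR (digit m n j * y j) / INR (m j).

Section Phase.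

Variable m : nat -> nat.
Hypothesis hm : forall j, (2 <= m j)%nat.

Lemma theta_term_small n y j : (n < M m j)%nat -> theta_term m n y j = 0.
Proof. intros H. unfold theta_term. rewrite digit_small by auto. simpl. lra. Qed.

(* Terms beyond the last nonzero digit of [n] vanish, so the range of the sum in [theta] is irrelevant. *)
Lemma theta_as_rsum n y p : (n < M m p)%nat -> theta m n y = 2 * PI * rsum (theta_term m n y) p.
Proof.
  intros Hp. unfold theta. f_equal. apply rsum_vanishing_tail; intros j Hj; apply theta_term_small.
  - pose proof (M_gt_index m hm j); lia.
  - pose proof (M_le_mono m hm p j Hj); lia.
Qed.

Lemma theta_zero_low s b y :
  (forall p, (p < s)%nat -> y p = 0%nat) -> (b < M m s)%nat -> theta m b y = 0.
Proof.
  intros Hy Hb. rewrite (theta_as_rsum b y s Hb), rsum_eq0; [ring|].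
  intros j Hj. unfold theta_term. rewrite Hy, Nat.mul_0_r by auto. simpl. lra.
Qed.

Lemma theta_first_digit c y : (c < m 0)%nat ->
  theta m c y = INR c * (2 * PI * INR (y 0%nat) / INR (m 0%nat)).
Proof.
  intros Hc. rewrite (theta_as_rsum c y 1) by (cbn [M]; lia). cbn [rsum].
  unfold theta_term, digit. cbn [M]. rewrite Nat.div_1_r, Nat.mod_small, mult_INR by auto.
  unfold Rdiv. ring.
Qed.

End Phase.

Lemma theta_mixed m (hm : forall j, (2 <= m j)%nat) s a b y : (b < M m s)%nat ->
  theta m (a * M m s + b) y = theta m b y + theta (shift s m) a (shift s y).
Proof.
  intros Hb. set (n := (a * M m s + b)%nat).
  assert (hms : forall j, (2 <= shift s m j)%nat) by (intros; apply hm).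
  assert (Han : (a <= n)%nat) by (pose proof (M_pos m hm s); unfold n; nia).
  assert (Ha : (a < M (shift s m) n)%nat) by (pose proof (M_gt_index _ hms n); lia).
  rewrite (theta_as_rsum m hm n y (s + n)), rsum_add.
  2:{ rewrite M_add. assert (a + 1 <= M (shift s m) n)%nat by lia. unfold n at 1. nia. }
  rewrite (theta_as_rsum m hm b y s Hb), (theta_as_rsum _ hms a _ n Ha).
  rewrite (rsum_ext (theta_term m n y) (theta_term m b y))
    by (intros; unfold theta_term, n; now rewrite digit_mixed_low).
  rewrite (rsum_ext (fun i => theta_term m n y (s + i)) (theta_term (shift s m) a (shift s y)))
    by (intros; cbv beta; unfold theta_term, n; now rewrite digit_mixed_high).
  ring.
Qed.

Definition ec (t : R) : C := (cos t, sin t).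

Lemma ec_add a b : ec (a + b) = (ec a * ec b)%C.
Proof. unfold ec, Cmult; simpl. rewrite cos_plus, sin_plus. f_equal; ring. Qed.

Lemma ec_0 : ec 0 = RtoC 1.
Proof. unfold ec, RtoC. now rewrite cos_0, sin_0. Qed.

Lemma Cmod_ec a : Cmod (ec a) = 1.
Proof.
  unfold Cmod, ec; simpl. transitivity (sqrt 1); [f_equal|apply sqrt_1].
  pose proof (sin2_cos2 a). unfold Rsqr in *. lra.
Qed.

Lemma ec_2PI_nat k : ec (2 * PI * INR k) = RtoC 1.
Proof.
  unfold ec, RtoC. pose proof (cos_period 0 k). pose proof (sin_period 0 k).
  replace (0 + 2 * INR k * PI) with (2 * PI * INR k) in * by ring.
  now rewrite H, H0, cos_0, sin_0.
Qed.

Lemma ec_neq1 a : 0 < a < 2 * PI -> ec a <> RtoC 1.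
Proof.
  intros Ha E. unfold ec, RtoC in E. injection E as Ecos Esin.
  destruct (sin_eq_O_2PI_0 a) as [H|[H|H]]; try lra.
  subst. rewrite cos_PI in Ecos. lra.
Qed.

Fixpoint csum (f : nat -> C) (n : nat) : C :=
  match n with O => RtoC 0 | S n' => (csum f n' + f n')%C end.

Lemma csum_ext f g n : (forall j, (j < n)%nat -> f j = g j) -> csum f n = csum g n.
Proof. induction n; intros H; cbn [csum]; auto. rewrite IHn, H; auto. Qed.

Lemma csum_add f p q : csum f (p + q) = (csum f p + csum (fun i => f (p + i)%nat) q)%C.
Proof.
  induction q as [|q IHq]; cbn [csum].
  - rewrite Nat.add_0_r; ring.
  - rewrite Nat.add_succ_r; cbn [csum]; rewrite IHq; ring.
Qed.

Lemma csum_block f a b : csum f (a * b) = csum (fun i => csum (fun j => f (i * b + j)%nat) b) a.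
Proof. induction a; simpl; auto. now rewrite <- IHa, Nat.add_comm, csum_add. Qed.

Lemma csum_eq0 f n : (forall j, (j < n)%nat -> f j = RtoC 0) -> csum f n = RtoC 0.
Proof. induction n; intros H; cbn [csum]; auto. rewrite IHn, H; auto; ring. Qed.

Lemma csum_mult_l z f n : csum (fun i => (z * f i)%C) n = (z * csum f n)%C.
Proof. induction n; cbn [csum]; [ring|]. rewrite IHn; ring. Qed.

Lemma csum_mult_r z f n : csum (fun i => (f i * z)%C) n = (csum f n * z)%C.
Proof. induction n; cbn [csum]; [ring|]. rewrite IHn; ring. Qed.

Lemma csum_const z n : csum (fun _ => z) n = (RtoC (INR n) * z)%C.
Proof.
  induction n; cbn [csum]; [simpl; ring|]. rewrite IHn, S_INR, RtoC_plus. ring.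
Qed.

Lemma csum_telescope f n : csum (fun i => (f (S i) - f i)%C) n = (f n - f 0%nat)%C.
Proof. induction n; cbn [csum]; [ring|]. rewrite IHn; ring. Qed.

Lemma Cmod_csum_le f n c : (forall j, (j < n)%nat -> Cmod (f j) <= c) -> Cmod (csum f n) <= INR n * c.
Proof.
  induction n; intros H; cbn [csum]; [rewrite Cmod_0; simpl; lra|].
  eapply Rle_trans; [apply Cmod_triangle|]. rewrite S_INR.
  pose proof (IHn (fun j Hj => H j ltac:(lia))). pose proof (H n ltac:(lia)). lra.
Qed.

Lemma csum_ec_geometric a n :
  ec a <> RtoC 1 -> ec (INR n * a) = RtoC 1 -> csum (fun c => ec (INR c * a)) n = RtoC 0.
Proof.
  intros Ha Hn.
  assert (Hne : (ec a - 1)%C <> RtoC 0).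
  { intros E. apply Ha. replace (ec a) with (ec a - 1 + 1)%C by ring. rewrite E. ring. }
  assert (Htel : ((ec a - 1) * csum (fun c => ec (INR c * a)) n)%C = RtoC 0).
  { rewrite <- csum_mult_l.
    rewrite (csum_ext _ (fun c => (ec (INR (S c) * a) - ec (INR c * a))%C)).
    - rewrite (csum_telescope (fun c => ec (INR c * a))), Hn. simpl. rewrite Rmult_0_l, ec_0. ring.
    - intros c _. rewrite S_INR, Rmult_plus_distr_r, Rmult_1_l, Rplus_comm, ec_add. ring. }
  rewrite <- (Cmult_1_l (csum _ _)), <- (Cinv_l _ Hne), <- Cmult_assoc, Htel. ring.
Qed.

Definition psi m n y := ec (theta m n y).
Definition dirichlet m n y := csum (fun j => psi m j y) n.
(* [fejer_sum m n y] is [n K_n(y)]. *)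
Definition fejer_sum m n y := csum (fun j => dirichlet m j y) n.

Lemma Cmod_psi m n y : Cmod (psi m n y) = 1.
Proof. apply Cmod_ec. Qed.

Lemma psi_mixed m (hm : forall j, (2 <= m j)%nat) s a b y : (b < M m s)%nat ->
  psi m (a * M m s + b) y = (psi m b y * psi (shift s m) a (shift s y))%C.
Proof. intros. unfold psi. rewrite theta_mixed by auto. apply ec_add. Qed.

Lemma psi_zero_low m (hm : forall j, (2 <= m j)%nat) s b y :
  (forall p, (p < s)%nat -> y p = 0%nat) -> (b < M m s)%nat -> psi m b y = RtoC 1.
Proof. intros. unfold psi. rewrite (theta_zero_low m hm s) by auto. apply ec_0. Qed.

(* The characters [psi m c y], [c < m 0], run through the [m 0]-th roots of unity [ec (2 PI c y0 / m0)]. *)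
Lemma csum_psi_first_digit m (hm : forall j, (2 <= m j)%nat) y :
  (0 < y 0%nat < m 0%nat)%nat -> csum (fun c => psi m c y) (m 0%nat) = RtoC 0.
Proof.
  intros Hy. set (a := 2 * PI * INR (y 0%nat) / INR (m 0%nat)).
  assert (Hm : 0 < INR (m 0%nat)) by (apply lt_0_INR; lia).
  rewrite (csum_ext _ (fun c => ec (INR c * a)))
    by (intros; unfold psi; rewrite theta_first_digit; auto).
  pose proof PI_RGT_0.
  apply csum_ec_geometric.
  - apply ec_neq1. unfold a. split.
    + apply Rdiv_lt_0_compat; auto. apply Rmult_lt_0_compat; [lra|]. apply lt_0_INR; lia.
    + apply (Rmult_lt_reg_r (INR (m 0%nat))); auto. unfold Rdiv.
      rewrite Rmult_assoc, Rinv_l, Rmult_1_r by lra.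
      apply Rmult_lt_compat_l; [lra|]. apply lt_INR; lia.
  - replace (INR (m 0%nat) * a) with (2 * PI * INR (y 0%nat)) by (unfold a; field; lra).
    apply ec_2PI_nat.
Qed.

Section CharacterSums.

Variable m : nat -> nat.
Hypothesis hm : forall j, (2 <= m j)%nat.
Variables (k : nat) (y : nat -> nat).
Hypothesis hy_low : forall p, (p < k)%nat -> y p = 0%nat.
Hypothesis hy_k : (0 < y k < m k)%nat.

Lemma csum_psi_block : csum (fun j => psi m j y) (M m (S k)) = RtoC 0.
Proof.
  cbn [M]. rewrite csum_block.
  rewrite (csum_ext _ (fun c => (RtoC (INR (M m k)) * psi (shift k m) c (shift k y))%C)).
  2:{ intros c _. rewrite <- csum_const. apply csum_ext. intros d Hd.
      rewrite psi_mixed, (psi_zero_low m hm k) by auto. ring. }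
  rewrite csum_mult_l.
  replace (m k) with (shift k m 0%nat) by (unfold shift; f_equal; lia).
  rewrite csum_psi_first_digit; [ring|intros; apply hm|].
  unfold shift. now rewrite Nat.add_0_r.
Qed.

Lemma dirichlet_block_multiple a : dirichlet m (a * M m (S k)) y = RtoC 0.
Proof.
  unfold dirichlet. rewrite csum_block. apply csum_eq0. intros i _.
  rewrite (csum_ext _ (fun j => (psi m j y * psi (shift (S k) m) i (shift (S k) y))%C))
    by (intros; apply psi_mixed; auto).
  rewrite csum_mult_r, csum_psi_block. ring.
Qed.

Lemma Cmod_dirichlet_le_block j : Cmod (dirichlet m j y) <= INR (M m (S k)).
Proof.
  pose proof (M_pos m hm (S k)) as HM.
  rewrite (Nat.div_mod_eq j (M m (S k))). unfold dirichlet. rewrite csum_add.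
  fold (dirichlet m (M m (S k) * (j / M m (S k))) y).
  rewrite Nat.mul_comm, dirichlet_block_multiple, Cplus_0_l.
  eapply Rle_trans.
  - apply Cmod_csum_le with (c := 1). intros; rewrite Cmod_psi; lra.
  - rewrite Rmult_1_r. apply le_INR. pose proof (Nat.mod_upper_bound j (M m (S k))). lia.
Qed.

End CharacterSums.

Lemma Cmod_dirichlet_le m j y : Cmod (dirichlet m j y) <= INR j.
Proof.
  unfold dirichlet. rewrite <- (Rmult_1_r (INR j)).
  apply Cmod_csum_le. intros; rewrite Cmod_psi; lra.
Qed.

Section Splitting.

Variable m : nat -> nat.
Hypothesis hm : forall j, (2 <= m j)%nat.
Variables (s : nat) (y : nat -> nat).
Hypothesis hD : forall a, dirichlet m (a * M m s) y = RtoC 0.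

Lemma dirichlet_mixed a b : (b <= M m s)%nat ->
  dirichlet m (a * M m s + b) y = (psi (shift s m) a (shift s y) * dirichlet m b y)%C.
Proof.
  intros Hb. unfold dirichlet at 1. rewrite csum_add. fold (dirichlet m (a * M m s) y). rewrite hD.
  rewrite (csum_ext _ (fun j => (psi m j y * psi (shift s m) a (shift s y))%C))
    by (intros; apply psi_mixed; auto; lia).
  rewrite csum_mult_r. unfold dirichlet. ring.
Qed.

Lemma fejer_sum_mixed a b : (b <= M m s)%nat ->
  fejer_sum m (a * M m s + b) y =
  (dirichlet (shift s m) a (shift s y) * fejer_sum m (M m s) y
   + psi (shift s m) a (shift s y) * fejer_sum m b y)%C.
Proof.
  intros Hb. unfold fejer_sum at 1. rewrite csum_add, csum_block.
  rewrite (csum_ext (fun i => csum _ _)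
             (fun i => (psi (shift s m) i (shift s y) * fejer_sum m (M m s) y)%C)).
  2:{ intros i _. unfold fejer_sum. rewrite <- csum_mult_l. apply csum_ext.
      intros; apply dirichlet_mixed; lia. }
  rewrite (csum_ext (fun i => dirichlet m (a * M m s + i) y)
             (fun j => (psi (shift s m) a (shift s y) * dirichlet m j y)%C))
    by (intros; apply dirichlet_mixed; lia).
  now rewrite csum_mult_r, csum_mult_l.
Qed.

End Splitting.

Lemma rsum_fst_csum f n : rsum (fun i => fst (f i)) n = fst (csum f n).
Proof. induction n; cbn [rsum csum]; auto. now rewrite IHn. Qed.

Lemma rsum_snd_csum f n : rsum (fun i => snd (f i)) n = snd (csum f n).
Proof. induction n; cbn [rsum csum]; auto. now rewrite IHn. Qed.

Lemma K_abs_Cmod m n y : (0 < n)%nat -> K_abs m n y = Cmod (fejer_sum m n y) / INR n.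
Proof.
  intros Hn.
  assert (E : (K_re m n y, K_im m n y) = (RtoC (/ INR n) * fejer_sum m n y)%C).
  { unfold K_re, K_im, D_re, D_im, psi_re, psi_im, fejer_sum, dirichlet, Cmult, RtoC; simpl.
    rewrite <- rsum_fst_csum, <- rsum_snd_csum.
    rewrite !Rmult_0_l, Rminus_0_r, Rplus_0_r.
    f_equal; f_equal; apply rsum_ext; intros; [rewrite <- rsum_fst_csum | rewrite <- rsum_snd_csum];
      reflexivity. }
  unfold K_abs. change (sqrt (K_re m n y ^ 2 + K_im m n y ^ 2)) with (Cmod (K_re m n y, K_im m n y)).
  rewrite E, Cmod_mult, Cmod_R, Rabs_pos_eq.
  - unfold Rdiv. apply Rmult_comm.
  - apply Rlt_le, Rinv_0_lt_compat, lt_0_INR; lia.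
Qed.

Section FejerBound.

Variable m : nat -> nat.
Hypothesis hm : forall j, (2 <= m j)%nat.
Variable B : nat.
Hypothesis hB : forall j, (m j <= B)%nat.
Variables (N k l : nat) (y : nat -> nat).
Hypothesis hkl : (k < l)%nat.
Hypothesis hlN : (l <= N)%nat.
Hypothesis hy : in_INkl m N k l y.

Lemma in_INkl_lead : (forall p, (p < k)%nat -> y p = 0%nat) /\ (0 < y k < m k)%nat.
Proof. destruct hy as [HG [Hlow [Hk _]]]. specialize (HG k). split; auto; lia. Qed.

(* When [l < N], the digit [y l] makes the shifted Dirichlet kernels vanish on blocks of
   length [M m (S l) / M m (S k)]; when [l = N], the trivial bound suffices. *)
Lemma Cmod_dirichlet_shift_le a : (a * M m (S k) <= M m N)%nat ->
  Cmod (dirichlet (shift (S k) m) a (shift (S k) y)) * INR (M m (S k)) <= INR B * INR (M m l).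
Proof.
  intros Ha. rewrite <- mult_INR.
  destruct (Nat.lt_ge_cases l N) as [HlN | HlN].
  - destruct hy as [HG [_ [_ [Hmid Hl]]]].
    assert (Hyl : (0 < shift (S k) y (l - S k) < shift (S k) m (l - S k))%nat).
    { unfold shift. replace (S k + (l - S k))%nat with l by lia. specialize (HG l). specialize (Hl HlN). lia. }
    eapply Rle_trans.
    + apply Rmult_le_compat_r; [apply pos_INR|].
      apply (Cmod_dirichlet_le_block (shift (S k) m) (fun j => hm _) (l - S k) (shift (S k) y));
        [intros p Hp; apply Hmid; lia | exact Hyl].
    + rewrite <- mult_INR. apply le_INR.
      rewrite Nat.mul_comm, <- M_add. replace (S k + S (l - S k))%nat with (S l) by lia.
      cbn [M]. specialize (hB l). nia.
  - replace l with N by lia.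
    eapply Rle_trans; [apply Rmult_le_compat_r; [apply pos_INR | apply Cmod_dirichlet_le]|].
    rewrite <- mult_INR. apply le_INR. specialize (hB 0%nat). specialize (hm 0%nat). nia.
Qed.

Definition fejer_const := (INR B * INR B + INR B) * INR (M m k) * INR (M m l).

Lemma Cmod_fejer_sum_le n : (n <= M m N)%nat -> Cmod (fejer_sum m n y) <= fejer_const.
Proof.
  intros Hn. destruct in_INkl_lead as [Hlow Hk].
  pose proof (M_pos m hm (S k)) as HMs.
  pose proof (Nat.div_mod_eq n (M m (S k))) as Hn'.
  pose proof (Nat.mod_upper_bound n (M m (S k)) ltac:(lia)) as Hb.
  set (a := (n / M m (S k))%nat) in *. set (b := (n mod M m (S k))%nat) in *.
  rewrite Hn', Nat.mul_comm, fejer_sum_mixed by (auto using dirichlet_block_multiple; lia).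
  set (Ms := M m (S k)) in *.
  assert (HD : forall i, Cmod (dirichlet m i y) <= INR Ms) by (intros; apply Cmod_dirichlet_le_block; auto).
  assert (HFs : Cmod (fejer_sum m Ms y) <= INR Ms * INR Ms) by (apply Cmod_csum_le; auto).
  assert (HFb : Cmod (fejer_sum m b y) <= INR Ms * INR Ms).
  { eapply Rle_trans; [apply Cmod_csum_le; intros; apply HD|].
    apply Rmult_le_compat_r; [apply pos_INR | apply le_INR; lia]. }
  assert (Hshift := Cmod_dirichlet_shift_le a ltac:(unfold Ms; lia)). fold Ms in Hshift.
  assert (HMk : INR Ms <= INR B * INR (M m k)).
  { rewrite <- mult_INR. apply le_INR. unfold Ms. cbn [M]. specialize (hB k). nia. }
  assert (HMl : INR Ms <= INR (M m l)) by (apply le_INR, M_le_mono; auto).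
  eapply Rle_trans; [apply Cmod_triangle|]. rewrite !Cmod_mult, Cmod_psi.
  pose proof (Cmod_ge_0 (dirichlet (shift (S k) m) a (shift (S k) y))).
  pose proof (Cmod_ge_0 (fejer_sum m Ms y)).
  pose proof (pos_INR Ms). pose proof (pos_INR B). pose proof (pos_INR (M m k)). pose proof (pos_INR (M m l)).
  set (d := Cmod (dirichlet (shift (S k) m) a (shift (S k) y))) in *.
  assert (d * Cmod (fejer_sum m Ms y) <= INR B * INR (M m l) * INR Ms).
  { apply Rle_trans with (d * (INR Ms * INR Ms)); [apply Rmult_le_compat_l; auto | nra]. }
  assert (INR Ms * INR Ms <= INR (M m l) * (INR B * INR (M m k))) by (apply Rmult_le_compat; nra).
  assert (INR B * INR (M m l) * INR Ms <= INR B * INR (M m l) * (INR B * INR (M m k)))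
    by (apply Rmult_le_compat_l; auto; nra).
  unfold fejer_const. nra.
Qed.

Lemma fejer_const_nonneg : 0 <= fejer_const.
Proof.
  unfold fejer_const. pose proof (pos_INR B). pose proof (pos_INR (M m k)). pose proof (pos_INR (M m l)).
  apply Rmult_le_pos; [apply Rmult_le_pos|]; nra.
Qed.

(* Writing [n = a M_N + b], the Fejer sum is [a] copies of a full block plus a short one. *)
Lemma K_abs_le n : (M m N <= n)%nat -> K_abs m n y <= 2 * fejer_const / INR (M m N).
Proof.
  intros Hn. destruct in_INkl_lead as [Hlow Hk].
  pose proof (M_pos m hm N) as HMN.
  assert (hD : forall a, dirichlet m (a * M m N) y = RtoC 0).
  { intros a. replace N with (S k + (N - S k))%nat by lia. rewrite M_add.
    rewrite Nat.mul_comm, <- Nat.mul_assoc, Nat.mul_comm.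
    now apply dirichlet_block_multiple. }
  pose proof (Nat.div_mod_eq n (M m N)) as Hn'.
  pose proof (Nat.mod_upper_bound n (M m N) ltac:(lia)) as Hb.
  set (a := (n / M m N)%nat) in *. set (b := (n mod M m N)%nat) in *.
  assert (Ha : (1 <= a)%nat) by (destruct a; lia).
  assert (HF : Cmod (fejer_sum m n y) <= (INR a + 1) * fejer_const).
  { rewrite Hn', Nat.mul_comm, fejer_sum_mixed by (auto; lia).
    eapply Rle_trans; [apply Cmod_triangle|]. rewrite !Cmod_mult, Cmod_psi.
    pose proof (Cmod_dirichlet_le (shift N m) a (shift N y)).
    pose proof (Cmod_fejer_sum_le (M m N) (Nat.le_refl _)).
    pose proof (Cmod_fejer_sum_le b ltac:(lia)).
    pose proof (Cmod_ge_0 (dirichlet (shift N m) a (shift N y))).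
    pose proof (Cmod_ge_0 (fejer_sum m (M m N) y)).
    pose proof (pos_INR a). pose proof fejer_const_nonneg. nra. }
  assert (HaN : (INR a + 1) * INR (M m N) <= 2 * INR n).
  { assert (INR (a * M m N) <= INR n) by (apply le_INR; lia). rewrite mult_INR in H.
    assert (1 <= INR a) by (apply (le_INR 1); auto). pose proof (pos_INR (M m N)). nra. }
  pose proof fejer_const_nonneg.
  assert (0 < INR n) by (apply lt_0_INR; lia). assert (0 < INR (M m N)) by (apply lt_0_INR; lia).
  rewrite K_abs_Cmod by lia.
  apply Rle_trans with ((INR a + 1) * fejer_const / INR n).
  - unfold Rdiv. apply Rmult_le_compat_r; [apply Rlt_le, Rinv_0_lt_compat|]; auto.
  - apply Rmult_le_reg_r with (INR n * INR (M m N)); [nra|].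
    replace ((INR a + 1) * fejer_const / INR n * (INR n * INR (M m N)))
      with ((INR a + 1) * INR (M m N) * fejer_const) by (field; lra).
    replace (2 * fejer_const / INR (M m N) * (INR n * INR (M m N)))
      with (2 * INR n * fejer_const) by (field; lra).
    apply Rmult_le_compat_r; auto.
Qed.

End FejerBound.

Lemma haar_int_IN_le m (hm : forall j, (2 <= m j)%nat) N f v c :
  (forall q, f (fun j => digit m (q * M m N) j) <= c) -> haar_int_IN m N f v -> v <= c / INR (M m N).
Proof.
  intros Hf [J [HJ [_ ->]]].
  pose proof (M_pos m hm N) as HMN.
  set (Q := M (shift N m) (J - N)).
  assert (HQ : M m J = (Q * M m N)%nat).
  { unfold Q. replace J with (N + (J - N))%nat at 1 by lia. rewrite M_add. ring. }
  assert (HQpos : (0 < Q)%nat) by (apply M_pos; intros; apply hm).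
  rewrite HQ, rsum_block, mult_INR.
  set (g := fun a => if Nat.eqb (a mod M m N) 0 then f (fun j => digit m a j) else 0).
  assert (Hblock : forall q, rsum (fun j => g (q * M m N + j)%nat) (M m N) <= c).
  { intros q. pose proof (rsum_add (fun j => g (q * M m N + j)%nat) 1 (M m N - 1)) as E.
    replace (1 + (M m N - 1))%nat with (M m N) in E by lia.
    rewrite E, (rsum_eq0 (fun i => g (q * M m N + (1 + i))%nat)); cbn [rsum].
    - unfold g. rewrite Nat.add_0_r, Nat.Div0.mod_mul. simpl. specialize (Hf q). lra.
    - intros j Hj. unfold g. rewrite Nat.add_comm, Nat.Div0.mod_add, Nat.mod_small by lia. reflexivity. }
  assert (0 < INR Q) by (apply lt_0_INR; lia). assert (0 < INR (M m N)) by (apply lt_0_INR; lia).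
  apply Rle_trans with (INR Q * c / (INR Q * INR (M m N))).
  - unfold Rdiv. apply Rmult_le_compat_r; [apply Rlt_le, Rinv_0_lt_compat; nra|].
    apply rsum_le_const. intros q _. exact (Hblock q).
  - right. field. lra.
Qed.

Lemma gsub_in_INkl m (hm : forall j, (2 <= m j)%nat) N k l x t : (k < N)%nat -> (l <= N)%nat ->
  in_INkl m N k l x -> (forall j, (j < N)%nat -> t j = 0%nat) -> in_INkl m N k l (gsub m x t).
Proof.
  intros HkN HlN [HG [Hlow [Hk [Hmid Hl]]]] Ht.
  assert (Hagree : forall j, (j < N)%nat -> gsub m x t j = x j).
  { intros j Hj. unfold gsub. rewrite Ht, Nat.sub_0_r by auto.
    replace (x j + m j)%nat with (x j + 1 * m j)%nat by lia.
    rewrite Nat.Div0.mod_add. apply Nat.mod_small, HG. }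
  repeat split.
  - intros j. apply Nat.mod_upper_bound. specialize (hm j). lia.
  - intros j Hj. rewrite Hagree by lia. auto.
  - rewrite Hagree by lia. auto.
  - intros j Hkj Hjl. rewrite Hagree by lia. auto.
  - intros HlN'. rewrite Hagree by lia. auto.
Qed.

Theorem lemma4 (m : nat -> nat)
  (hm2 : forall j, (2 <= m j)%nat)
  (hbdd : exists B, forall j, (m j <= B)%nat) :
  exists c : R,
    forall (N k l : nat) (x : nat -> nat) (n : nat),
      (1 <= N)%nat -> (k <= N - 1)%nat -> (k + 1 <= l)%nat -> (l <= N)%nat ->
      in_INkl m N k l x ->
      (M m N <= n)%nat ->
      forall v : R,
        haar_int_IN m N (fun t => K_abs m n (gsub m x t)) v ->
        v <= c * INR (M m l) * INR (M m k) / (INR (M m N) ^ 2).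
Proof.
  destruct hbdd as [B hB].
  exists (2 * (INR B * INR B + INR B)).
  intros N k l x n HN Hk Hkl HlN Hx Hn v Hv.
  eapply Rle_trans.
  - apply (haar_int_IN_le m hm2 N (fun t => K_abs m n (gsub m x t)) v
             (2 * fejer_const m B k l / INR (M m N))); [|exact Hv].
    intros q. apply (K_abs_le m hm2 B hB N k l); try lia.
    apply gsub_in_INkl; auto; try lia.
    intros j Hj. now apply digit_multiple_low.
  - unfold fejer_const. right. field.
    apply not_0_INR. pose proof (M_pos m hm2 N). lia.
Qed.
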